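(* Let $K$ be the irreducible cyclic code of length $n$ over $GF(q)$ with monic irreducible parity-check polynomial $h(x)$ of degree $m$ and order $n\ne q^m-1$. Then the Hamming weight of every codeword of $K$ is a multiple of $d=\gcd(q-1,n)$.
   Context: Let $q>2$ be a prime power. $A_n=GF(q)[x]/(x^n-1)$; Hamming weight of an element = number of nonzero coefficients of its representative of degree $<n$. The order of $h$ is the least $e\ge1$ with $h\mid x^e-1$. $K$ is the ideal of $A_n$ generated by $(x^n-1)/h(x)$. *)

From HB Require Import structures.
From mathcomp Require Import all_boot all_order all_algebra.
Set Implicit Arguments. Unset Strict Implicit. Unset Printing Implicit Defensive.
Import GRing.Theory.
Local Open Scope ring_scope.

Definition poly_order (F : fieldType) (h : {poly F}) (e : nat) : Prop :=
  (0 < e)%N /\ h %| 'X^e - 1 /\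
  (forall e' : nat, (0 < e')%N -> (e' < e)%N -> ~~ (h %| 'X^e' - 1)).

(* Elements of A_n = F[x]/(x^n-1) are represented by their unique
   representatives of degree < n. [in_K n h c]: c is such a representative
   lying in the ideal K generated by (x^n-1)/h. *)
Definition in_K (F : fieldType) (n : nat) (h c : {poly F}) : Prop :=
  (size c <= n)%N /\
  exists a : {poly F}, c = (a * (('X^n - 1) %/ h)) %% ('X^n - 1).

Definition hamming_weight (F : fieldType) (n : nat) (c : {poly F}) : nat :=
  (\sum_(i < n) nat_of_bool (c`_i != 0)%R)%N.

From HB Require Import structures.
From mathcomp Require Import all_boot all_order all_algebra finfield zify.
Set Implicit Arguments.
Unset Strict Implicit.
Import GRing.Theory.
Local Open Scope ring_scope.

(* Let q = #|F|, d = gcd(q - 1, n) and u = n / d, so that n = u * d.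
   1. Since h divides x^n - 1 = (x^u)^d - 1 and d | q - 1, the residue of x^u
      modulo h satisfies r^q = r; as x^q - x splits into linear factors over
      F and h is irreducible, h divides x^u - a for some nonzero a in F.
   2. Every c in K is killed by h modulo x^n - 1, so (x^u - a) c = 0 in A_n;
      since deg c < n, comparing coefficients gives c_j = a c_(j+u) whenever
      j + u < n.
   3. Hence the support of c is invariant under the shift by u, the positions
      0, ..., n - 1 split into d blocks of length u carrying the same number
      of nonzero coefficients, and wt(c) = d * (weight of the first block). *)

Lemma irred_dvd_prod_lin (F : fieldType) (h r : {poly F}) (s : seq F) :
  irreducible_poly h -> h %| \prod_(a <- s) (r - a%:P) ->
  exists a, h %| r - a%:P.
Proof.
move=> h_irr; elim: s => [|a s IHs].
  by rewrite big_nil dvdp1 => /eqP h1; case: h_irr; rewrite h1.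
rewrite big_cons; have [ha|nha] := boolP (h %| r - a%:P); first by exists a.
by rewrite Gauss_dvdpr ?irreducible_poly_coprime.
Qed.

Lemma dvdp_expB1 (F : fieldType) (p : {poly F}) (d k : nat) :
  (d %| k)%N -> p ^+ d - 1 %| p ^+ k - 1.
Proof.
move=> /dvdnP [e ->]; rewrite mulnC exprM -{2}(expr1n _ e) subrXX.
exact: dvdp_mulIl.
Qed.

Lemma expr_card_subr (F : finFieldType) (r : {poly F}) :
  r ^+ #|F| - r = \prod_(a <- index_enum F) (r - a%:P).
Proof.
have := congr1 (fun p => p \Po r) (finField_genPoly F).
rewrite /= comp_polyB comp_Xn_poly comp_polyX => ->.
rewrite (big_morph (fun p => p \Po r) (fun p q => comp_polyM p q r)
  (comp_polyC 1 r)).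
by apply: eq_bigr => a _; rewrite comp_polyB comp_polyX comp_polyC.
Qed.

Lemma irred_frobenius_fixed (F : finFieldType) (h r : {poly F}) :
  irreducible_poly h -> h %| r ^+ #|F| - r -> exists a, h %| r - a%:P.
Proof. by move=> h_irr; rewrite expr_card_subr; apply: irred_dvd_prod_lin. Qed.

Lemma irred_Xn_const (F : finFieldType) (h : {poly F}) (u d : nat) :
  irreducible_poly h -> (0 < d)%N -> (d %| #|F| - 1)%N ->
  h %| 'X^(u * d)%N - 1 -> exists2 a : F, a != 0 & h %| 'X^u - a%:P.
Proof.
move=> h_irr d_gt0 d_dvd h_dvd.
have h_dvd_q1 : h %| ('X^u) ^+ (#|F| - 1) - 1.
  by apply: (dvdp_trans _ (dvdp_expB1 'X^u d_dvd)); rewrite -exprM.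
have q_gt0 : (0 < #|F|)%N by apply/card_gt0P; exists 0.
have [a ha] : exists a, h %| 'X^u - a%:P.
  apply: irred_frobenius_fixed => //.
  have -> : ('X^u) ^+ #|F| - 'X^u =
            'X^u * (('X^u) ^+ (#|F| - 1) - 1) :> {poly F}.
    by rewrite mulrBr mulr1 -exprS subn1 prednK.
  exact: dvdp_mull.
exists a => //; apply: contraTneq ha => ->; rewrite subr0; apply/negP => hXu.
have hXud : h %| 'X^(u * d)%N by rewrite exprM; apply: dvdp_exp.
move: h_dvd; rewrite (dvdp_subr _ hXud) dvdp1 => /eqP h1.
by case: h_irr; rewrite h1.
Qed.

Lemma in_K_annihilated (F : fieldType) (n : nat) (h p c : {poly F}) :
  h %| 'X^n - 1 -> h %| p -> in_K n h c -> 'X^n - 1 %| p * c.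
Proof.
move=> h_dvd hp [_ [a ->]]; rewrite /dvdp modp_mul -/(dvdp _ _).
rewrite mulrA [_ * a * _]mulrC -{1}(divpK h_dvd).
by apply: dvdp_mul => //; apply: dvdp_mulr.
Qed.

Lemma coef_shift_recurrence (F : fieldType) (n u : nat) (l : F) (c : {poly F}) :
  (0 < u)%N -> (size c <= n)%N -> 'X^n - 1 %| ('X^u - l%:P) * c ->
  forall j, (j + u < n)%N -> c`_j = l * c`_(j + u).
Proof.
move=> u_gt0 size_c /dvdpP [t Et] j jun.
have N_neq0 : 'X^n - 1 != 0 :> {poly F}.
  by rewrite -size_poly_eq0 -polyC1 size_XnsubC // (leq_trans _ jun).
have size_t : (size t <= u)%N.
  have [->|t_neq0] := eqVneq t 0; first by rewrite size_poly0.
  have := size_polyMleq ('X^u - l%:P) c.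
  rewrite Et size_mul // -polyC1 !size_XnsubC ?(leq_trans _ jun) // !addSn /=.
  move=> /leq_trans/(_ (leq_add (leqnn u) size_c)).
  by rewrite addnS /= leq_add2r.
move: (congr1 (fun p : {poly F} => p`_(j + u)) Et) => /=.
rewrite mulrBl mulrBr mulr1 !coefB coefXnM coefMXn coefCM.
rewrite ltnNge leq_addl addnK jun /=.
rewrite (nth_default _ (leq_trans size_t (leq_addl _ _))) subr0.
by move/eqP; rewrite subr_eq0 => /eqP.
Qed.

Section PeriodicSums.
Local Open Scope nat_scope.

Lemma sum_periodic (f : nat -> nat) (u d : nat) :
  (forall j, j + u < u * d -> f j = f (j + u)) ->
  \sum_(i < u * d) f i = d * \sum_(i < u) f i.
Proof.
move=> f_per.
have block k : k < d -> forall j, j < u -> f (j + u * k) = f j.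
  elim: k => [|k IHk] kd j ju; first by rewrite muln0 addn0.
  have k2d : u * k.+2 <= u * d by rewrite leq_mul2l kd orbT.
  rewrite mulnS addnCA addnC -f_per ?IHk ?(ltnW kd) //.
  by apply: leq_trans k2d; rewrite !mulnS; lia.
suff sum_blocks k : k <= d ->
    \sum_(0 <= i < u * k) f i = k * \sum_(0 <= i < u) f i.
  by rewrite -!(big_mkord xpredT) sum_blocks.
elim: k => [|k IHk] kd; first by rewrite muln0 big_geq.
rewrite mulnS addnC (big_cat_nat (n := u * k)) ?leq_addr //= IHk ?(ltnW kd) //.
rewrite mulSn addnC -{1}(add0n (u * k)) big_addn addKn.
by congr (_ + _); apply: eq_big_nat => j /andP [_ ju]; rewrite block.
Qed.

End PeriodicSums.

Lemma weight_of_recurrence (F : fieldType) (u d : nat) (l : F) (c : {poly F}) :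
  l != 0 -> (forall j, (j + u < u * d)%N -> c`_j = l * c`_(j + u)) ->
  hamming_weight (u * d)%N c = (d * hamming_weight u c)%N.
Proof.
move=> l_neq0 rec; rewrite /hamming_weight.
apply: (@sum_periodic (fun i => nat_of_bool (c`_i != 0))) => j ju.
by rewrite (rec j ju) mulf_eq0 (negbTE l_neq0).
Qed.

Theorem corollary6 (F : finFieldType) (n m : nat) (h : {poly F}) :
  (2 < #|F|)%N ->
  h \is monic -> irreducible_poly h -> size h = m.+1 ->
  poly_order h n -> n <> (#|F| ^ m - 1)%N ->
  forall c : {poly F}, in_K n h c ->
  (gcdn (#|F| - 1) n %| hamming_weight n c)%N.
Proof.
move=> _ _ h_irr _ [n_gt0 [h_dvd _]] _ c c_in_K.
set d := gcdn (#|F| - 1) n.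
have d_gt0 : (0 < d)%N by rewrite gcdn_gt0 n_gt0 orbT.
have n_eq : n = (n %/ d * d)%N by rewrite divnK ?dvdn_gcdr.
set u := (n %/ d)%N in n_eq *.
have u_gt0 : (0 < u)%N by move: n_gt0; rewrite n_eq muln_gt0 => /andP [].
have [a a_neq0 h_dvd_Xu] : exists2 a : F, a != 0 & h %| 'X^u - a%:P.
  by apply: (irred_Xn_const h_irr d_gt0 (dvdn_gcdl _ _)); rewrite -n_eq.
have rec := coef_shift_recurrence u_gt0 (proj1 c_in_K)
  (in_K_annihilated h_dvd h_dvd_Xu c_in_K).
have -> : hamming_weight n c = (d * hamming_weight u c)%N.
  rewrite [in LHS]n_eq; apply: weight_of_recurrence a_neq0 _ => j.
  by rewrite -n_eq; apply: rec.
exact: dvdn_mulr.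
Qed.
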